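(* Let $N\ge2$, $R>0$ and $u\in C(B_R,(0,\infty))$. Suppose there exists $M\in O(N)$ such that $u_M$ is axially symmetric with respect to the $x_N$-axis (i.e. for every $\alpha\in(0,R]$ and $h\in[-\alpha,\alpha]$, $u_M$ is constant on $\{x\in S^{N-1}_\alpha:x_N=h\}$) and, for every $\alpha\in(0,R]$, the function $\theta\mapsto u_M(0_{N-2},\alpha\cos\theta,\alpha\sin\theta)$ is nonincreasing on $[\pi/2,3\pi/2]$. Then $u$ is separable in $B_R$.
   Context: $B_R$ is the closed ball of radius $R$ centered at $0$ in $\mathbb{R}^N$; $S^{N-1}_\alpha$ is the sphere of radius $\alpha$ centered at $0$; $O(N)$ is the orthogonal group and $u_M(x):=u(M^{-1}x)$; $0_k$ is the zero vector of $\mathbb{R}^k$. For an open half-space $H$, $\sigma_H$ is the reflection across $\partial H$. A function $u:B_R\to\mathbb{R}$ is separable in $B_R$ if for every open half-space $H\subset\mathbb{R}^N$ with $0\in\partial H$, either $u(x)\ge u(\sigma_Hx)$ for all $x\in H\cap B_R$, or $u(x)\le u(\sigma_Hx)$ for all $x\in H\cap B_R$. *)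

From Stdlib Require Import Reals Lra Lia.
Open Scope R_scope.

(* Points of R^N are represented as functions nat -> R whose coordinates
   of index >= N vanish (coordinate i corresponds to x_{i+1}). *)
Definition point := nat -> R.

Definition inRN (N : nat) (x : point) : Prop :=
  forall i : nat, (N <= i)%nat -> x i = 0.

Fixpoint sumN (n : nat) (f : nat -> R) : R :=
  match n with
  | O => 0
  | S m => sumN m f + f m
  end.

Definition dot (N : nat) (x y : point) : R := sumN N (fun i => x i * y i).
Definition norm (N : nat) (x : point) : R := sqrt (dot N x x).
Definition vsub (x y : point) : point := fun i => x i - y i.

Definition in_ball (N : nat) (Rad : R) (x : point) : Prop :=
  inRN N x /\ norm N x <= Rad.
Definition in_sphere (N : nat) (alpha : R) (x : point) : Prop :=
  inRN N x /\ norm N x = alpha.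

Definition continuous_on_ball (N : nat) (Rad : R) (u : point -> R) : Prop :=
  forall x, in_ball N Rad x -> forall eps, 0 < eps ->
    exists delta, 0 < delta /\
      forall y, in_ball N Rad y -> norm N (vsub y x) < delta ->
        Rabs (u y - u x) < eps.

Definition orthogonal (N : nat) (M : nat -> nat -> R) : Prop :=
  forall i j, (i < N)%nat -> (j < N)%nat ->
    sumN N (fun k => M k i * M k j) = if Nat.eqb i j then 1 else 0.

(* M^{-1} x = M^T x for orthogonal M *)
Definition mat_inv_apply (N : nat) (M : nat -> nat -> R) (x : point) : point :=
  fun i => if Nat.ltb i N then sumN N (fun j => M j i * x j) else 0.

(* u_M(x) := u(M^{-1} x) *)
Definition rot (N : nat) (M : nat -> nat -> R) (u : point -> R) : point -> R :=
  fun x => u (mat_inv_apply N M x).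

Definition last2 (N : nat) (a b : R) : point :=
  fun i => if Nat.eqb i (N - 2) then a else if Nat.eqb i (N - 1) then b else 0.

(* reflection across the hyperplane nu^perp, nu a unit vector *)
Definition reflect (N : nat) (nu x : point) : point :=
  fun i => x i - 2 * dot N nu x * nu i.

(* Open half-spaces H with 0 in the boundary are exactly
   H = {x | nu . x > 0} with nu a unit vector of R^N. *)
Definition separable (N : nat) (Rad : R) (u : point -> R) : Prop :=
  forall nu : point, inRN N nu -> norm N nu = 1 ->
    (forall x, in_ball N Rad x -> dot N nu x > 0 -> u x >= u (reflect N nu x)) \/
    (forall x, in_ball N Rad x -> dot N nu x > 0 -> u x <= u (reflect N nu x)).

From Stdlib Require Import Reals Lra Lia FunctionalExtensionality.
Open Scope R_scope.

(* Write v := u_M.  Axial symmetry says that on each sphere S_alpha the value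
   v(a) only depends on the height a_N.  Sending a to the point of the
   half-meridian {(0, alpha cos t, alpha sin t) : pi/2 <= t <= 3pi/2} with the
   same height (t = pi/2 + acos (a_N / alpha)) and using the monotonicity in t
   shows that v is nondecreasing in a_N on every sphere.

   Given a unit vector nu and x with nu.x > 0, the points M x and M (sigma x)
   lie on the same sphere (M and the reflection sigma are isometries), and
   their heights differ by -2 (nu.x) (M nu)_N.  The sign of (M nu)_N does not
   depend on x, so it decides uniformly which of u(x), u(sigma x) is larger:
   this is separability. *)

Lemma sumN_ext n f g :
  (forall i, (i < n)%nat -> f i = g i) -> sumN n f = sumN n g.
Proof.
  induction n as [|n IH]; intros Hfg; simpl; [reflexivity|].
  rewrite IH, Hfg; [reflexivity|lia|intros i Hi; apply Hfg; lia].
Qed.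

Lemma sumN_zero n : sumN n (fun _ => 0) = 0.
Proof. induction n as [|n IH]; simpl; lra. Qed.

Lemma sumN_add n f g : sumN n (fun i => f i + g i) = sumN n f + sumN n g.
Proof. induction n as [|n IH]; simpl; [ring|]. rewrite IH; ring. Qed.

Lemma sumN_scal n c f : sumN n (fun i => c * f i) = c * sumN n f.
Proof. induction n as [|n IH]; simpl; [ring|]. rewrite IH; ring. Qed.

Lemma sumN_lincomb n f g c :
  sumN n (fun i => f i - c * g i) = sumN n f - c * sumN n g.
Proof. induction n as [|n IH]; simpl; [ring|]. rewrite IH; ring. Qed.

Lemma sumN_swap n m f :
  sumN n (fun i => sumN m (fun j => f i j)) = sumN m (fun j => sumN n (fun i => f i j)).
Proof.
  induction n as [|n IH]; simpl; [symmetry; apply sumN_zero|].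
  rewrite IH, <- sumN_add; reflexivity.
Qed.

Lemma sumN_delta n i f :
  (i < n)%nat -> sumN n (fun k => (if Nat.eqb i k then 1 else 0) * f k) = f i.
Proof.
  induction n as [|n IH]; intros Hi; [lia|]; simpl.
  destruct (Nat.eqb_spec i n) as [->|Hne].
  - rewrite (sumN_ext n _ (fun _ => 0)), sumN_zero; [ring|].
    intros k Hk; destruct (Nat.eqb_spec n k); [lia|ring].
  - rewrite IH by lia; ring.
Qed.

Lemma sumN_nonneg n f : (forall i, 0 <= f i) -> 0 <= sumN n f.
Proof.
  intros Hf; induction n as [|n IH]; simpl; [lra|].
  specialize (Hf n); lra.
Qed.

Lemma sumN_term_le n f i : (forall k, 0 <= f k) -> (i < n)%nat -> f i <= sumN n f.
Proof.
  intros Hf; induction n as [|n IH]; intros Hi; [lia|]; simpl.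
  destruct (Nat.eq_dec i n) as [->|Hne].
  - pose proof (sumN_nonneg n f Hf); lra.
  - specialize (IH ltac:(lia)); specialize (Hf n); lra.
Qed.

Lemma dot_self_nonneg N x : 0 <= dot N x x.
Proof. apply sumN_nonneg; intros; nra. Qed.

Lemma norm_nonneg N x : 0 <= norm N x.
Proof. apply sqrt_pos. Qed.

Lemma norm_sq N x : norm N x * norm N x = dot N x x.
Proof. apply sqrt_sqrt, dot_self_nonneg. Qed.

Lemma coord_le_norm N x i : (i < N)%nat -> - norm N x <= x i <= norm N x.
Proof.
  intros Hi.
  assert (Hxi : x i * x i <= dot N x x)
    by (apply (sumN_term_le N (fun k => x k * x k)); [intros; nra|exact Hi]).
  rewrite <- norm_sq in Hxi; pose proof (norm_nonneg N x); split; nra.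
Qed.

Lemma norm_pos_of_dot N y x : dot N y x <> 0 -> 0 < norm N x.
Proof.
  intros Hd; destruct (Rle_lt_dec (norm N x) 0) as [Hle|]; [exfalso|assumption].
  apply Hd; unfold dot; rewrite (sumN_ext N _ (fun _ => 0)); [apply sumN_zero|].
  intros i Hi; pose proof (coord_le_norm N x i Hi); pose proof (norm_nonneg N x).
  assert (x i = 0) as -> by lra; ring.
Qed.

Lemma inRN_lincomb N x y c : inRN N x -> inRN N y -> inRN N (fun i => x i - c * y i).
Proof. intros Hx Hy i Hi; rewrite Hx, Hy by exact Hi; ring. Qed.

Lemma dot_lincomb_self N x y c :
  dot N (fun i => x i - c * y i) (fun i => x i - c * y i)
  = dot N x x - 2 * c * dot N y x + c * c * dot N y y.
Proof.
  unfold dot; rewrite <- (sumN_scal N (c * c)), <- sumN_lincomb, <- sumN_add.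
  apply sumN_ext; intros; ring.
Qed.

Lemma norm_reflect N nu x :
  dot N nu nu = 1 -> norm N (reflect N nu x) = norm N x.
Proof.
  intros Hnu; unfold norm, reflect.
  rewrite (dot_lincomb_self N x nu (2 * dot N nu x)), Hnu; f_equal; ring.
Qed.

Definition mat_apply (N : nat) (M : nat -> nat -> R) (x : point) : point :=
  fun i => if Nat.ltb i N then sumN N (fun j => M i j * x j) else 0.

Lemma inRN_mat_apply N M x : inRN N (mat_apply N M x).
Proof. intros i Hi; unfold mat_apply; destruct (Nat.ltb_spec i N); [lia|reflexivity]. Qed.

Lemma mat_apply_lincomb N M x y c i : (i < N)%nat ->
  mat_apply N M (fun j => x j - c * y j) i = mat_apply N M x i - c * mat_apply N M y i.
Proof.
  intros Hi; unfold mat_apply; destruct (Nat.ltb_spec i N); [|lia].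
  rewrite <- sumN_lincomb; apply sumN_ext; intros; ring.
Qed.

Lemma mat_inv_apply_mat_apply N M x :
  orthogonal N M -> inRN N x -> mat_inv_apply N M (mat_apply N M x) = x.
Proof.
  intros HM Hx; extensionality i; unfold mat_inv_apply.
  destruct (Nat.ltb_spec i N) as [Hi|Hi]; [|symmetry; apply Hx; lia].
  rewrite (sumN_ext N _ (fun j => sumN N (fun k => M j i * M j k * x k))).
  2:{ intros j Hj; unfold mat_apply; destruct (Nat.ltb_spec j N); [|lia].
      rewrite <- sumN_scal; apply sumN_ext; intros; ring. }
  rewrite sumN_swap, <- (sumN_delta N i x Hi); apply sumN_ext; intros k Hk.
  rewrite <- HM, Rmult_comm, <- sumN_scal by assumption.
  apply sumN_ext; intros; ring.
Qed.

Lemma norm_mat_apply N M x :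
  orthogonal N M -> inRN N x -> norm N (mat_apply N M x) = norm N x.
Proof.
  intros HM Hx; unfold norm, dot; f_equal.
  rewrite (sumN_ext N _ (fun i => sumN N (fun k => M i k * x k * mat_apply N M x i))).
  2:{ intros i Hi; unfold mat_apply at 1; destruct (Nat.ltb_spec i N); [|lia].
      rewrite Rmult_comm, <- sumN_scal; apply sumN_ext; intros; ring. }
  rewrite sumN_swap; apply sumN_ext; intros k Hk.
  pose proof (f_equal (fun p => p k) (mat_inv_apply_mat_apply N M x HM Hx)) as Ek.
  unfold mat_inv_apply in Ek; simpl in Ek; destruct (Nat.ltb_spec k N); [|lia].
  rewrite <- Ek at 2; rewrite <- sumN_scal; apply sumN_ext; intros; ring.
Qed.

Lemma rot_mat_apply N M u x :
  orthogonal N M -> inRN N x -> rot N M u (mat_apply N M x) = u x.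
Proof. intros HM Hx; unfold rot; rewrite mat_inv_apply_mat_apply by assumption; reflexivity. Qed.

Lemma inRN_last2 N a b : (2 <= N)%nat -> inRN N (last2 N a b).
Proof.
  intros HN i Hi; unfold last2.
  destruct (Nat.eqb_spec i (N - 2)); [lia|]; destruct (Nat.eqb_spec i (N - 1)); [lia|reflexivity].
Qed.

Lemma last2_height N a b : (2 <= N)%nat -> last2 N a b (N - 1)%nat = b.
Proof.
  intros HN; unfold last2.
  destruct (Nat.eqb_spec (N - 1) (N - 2)); [lia|]; rewrite Nat.eqb_refl; reflexivity.
Qed.

Lemma dot_last2 N a b : (2 <= N)%nat -> dot N (last2 N a b) (last2 N a b) = a * a + b * b.
Proof.
  intros HN; destruct N as [|[|n]]; [lia|lia|]; unfold dot, last2.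
  replace (S (S n) - 2)%nat with n by lia; replace (S (S n) - 1)%nat with (S n) by lia.
  cbn [sumN]; rewrite (sumN_ext n _ (fun _ => 0)), sumN_zero.
  - rewrite Nat.eqb_refl, (proj2 (Nat.eqb_neq (S n) n)), Nat.eqb_refl by lia; ring.
  - intros i Hi; rewrite (proj2 (Nat.eqb_neq i n)), (proj2 (Nat.eqb_neq i (S n))) by lia; ring.
Qed.

Lemma acos_antitone a b : -1 <= a <= 1 -> -1 <= b <= 1 -> a <= b -> acos b <= acos a.
Proof.
  intros Ha Hb Hab; destruct (Rle_lt_dec (acos b) (acos a)) as [|Hlt]; [assumption|].
  pose proof (acos_bound a); pose proof (acos_bound b).
  pose proof (cos_decreasing_1 (acos a) (acos b) ltac:(lra) ltac:(lra) ltac:(lra) ltac:(lra) Hlt).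
  rewrite !cos_acos in * by assumption; lra.
Qed.

Section HeightMonotone.

Variables (N : nat) (Rad : R) (v : point -> R).
Hypothesis HN : (2 <= N)%nat.
Hypothesis v_axial : forall alpha h, 0 < alpha <= Rad -> -alpha <= h <= alpha ->
  forall x y, in_sphere N alpha x -> in_sphere N alpha y ->
    x (N - 1)%nat = h -> y (N - 1)%nat = h -> v x = v y.
Hypothesis v_meridian : forall alpha, 0 < alpha <= Rad ->
  forall t1 t2, PI / 2 <= t1 -> t1 <= t2 -> t2 <= 3 * PI / 2 ->
    v (last2 N (alpha * cos t2) (alpha * sin t2))
    <= v (last2 N (alpha * cos t1) (alpha * sin t1)).

Definition meridian_angle (alpha h : R) : R := PI / 2 + acos (h / alpha).

Definition meridian_point (alpha h : R) : point :=
  last2 N (alpha * cos (meridian_angle alpha h)) (alpha * sin (meridian_angle alpha h)).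

Lemma ratio_bound alpha h : 0 < alpha -> -alpha <= h <= alpha -> -1 <= h / alpha <= 1.
Proof.
  intros Ha Hh; split.
  - apply (Rmult_le_reg_r alpha); [lra|]; unfold Rdiv; rewrite Rmult_assoc, Rinv_l; lra.
  - apply (Rmult_le_reg_r alpha); [lra|]; unfold Rdiv; rewrite Rmult_assoc, Rinv_l; lra.
Qed.

Lemma meridian_angle_range alpha h : PI / 2 <= meridian_angle alpha h <= 3 * PI / 2.
Proof. unfold meridian_angle; pose proof (acos_bound (h / alpha)); lra. Qed.

Lemma meridian_point_spec alpha h : 0 < alpha -> -alpha <= h <= alpha ->
  in_sphere N alpha (meridian_point alpha h) /\ meridian_point alpha h (N - 1)%nat = h.
Proof.
  intros Ha Hh; unfold meridian_point; set (t := meridian_angle alpha h).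
  split; [split; [apply inRN_last2, HN|]|].
  - unfold norm; rewrite dot_last2 by exact HN.
    pose proof (sin2_cos2 t) as Hpyth; unfold Rsqr in Hpyth.
    replace (alpha * cos t * (alpha * cos t) + alpha * sin t * (alpha * sin t))
      with (alpha * alpha) by nra.
    apply sqrt_square; lra.
  - rewrite last2_height by exact HN; unfold t, meridian_angle.
    rewrite sin_plus, sin_PI2, cos_PI2, cos_acos by (apply ratio_bound; assumption).
    field; lra.
Qed.

Lemma v_at_meridian alpha a : 0 < alpha <= Rad -> in_sphere N alpha a ->
  v a = v (meridian_point alpha (a (N - 1)%nat)).
Proof.
  intros Ha Hsph.
  assert (Hh : -alpha <= a (N - 1)%nat <= alpha)
    by (destruct Hsph as [_ <-]; apply coord_le_norm; lia).
  destruct (meridian_point_spec alpha (a (N - 1)%nat) ltac:(lra) Hh) as [Hm Hmh].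
  apply (v_axial alpha (a (N - 1)%nat)); auto.
Qed.

Lemma v_height_monotone alpha a b : 0 < alpha <= Rad ->
  in_sphere N alpha a -> in_sphere N alpha b ->
  a (N - 1)%nat <= b (N - 1)%nat -> v a <= v b.
Proof.
  intros Ha Hsa Hsb Hab.
  rewrite (v_at_meridian alpha a), (v_at_meridian alpha b) by assumption.
  assert (Hbnd : forall c, in_sphere N alpha c -> -1 <= c (N - 1)%nat / alpha <= 1)
    by (intros c [_ Hc]; apply ratio_bound; [lra|rewrite <- Hc; apply coord_le_norm; lia]).
  apply v_meridian; [assumption| apply meridian_angle_range | |apply meridian_angle_range].
  unfold meridian_angle; apply Rplus_le_compat_l, acos_antitone; auto.
  unfold Rdiv; apply Rmult_le_compat_r; [left; apply Rinv_0_lt_compat; lra|assumption].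
Qed.

End HeightMonotone.

Lemma rotated_reflection N Rad M u nu x :
  (1 <= N)%nat -> orthogonal N M -> inRN N nu -> dot N nu nu = 1 ->
  in_ball N Rad x -> dot N nu x > 0 ->
  let a := mat_apply N M x in
  let b := mat_apply N M (reflect N nu x) in
  0 < norm N x <= Rad /\ in_sphere N (norm N x) a /\ in_sphere N (norm N x) b /\
  b (N - 1)%nat = a (N - 1)%nat - 2 * dot N nu x * mat_apply N M nu (N - 1)%nat /\
  u x = rot N M u a /\ u (reflect N nu x) = rot N M u b.
Proof.
  intros HN HM Hnu Hnn [Hx Hxn] Hd a b.
  assert (Hr : inRN N (reflect N nu x)) by (apply inRN_lincomb; assumption).
  repeat split.
  - apply (norm_pos_of_dot N nu); lra.
  - exact Hxn.
  - apply inRN_mat_apply.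
  - apply norm_mat_apply; assumption.
  - apply inRN_mat_apply.
  - unfold b; rewrite norm_mat_apply, norm_reflect by assumption; reflexivity.
  - apply mat_apply_lincomb; lia.
  - unfold a; rewrite rot_mat_apply by assumption; reflexivity.
  - unfold b; rewrite rot_mat_apply by assumption; reflexivity.
Qed.

(* Separability criterion: if u_M is nondecreasing in the height x_N on every
   sphere S_alpha, 0 < alpha <= R, then u is separable in B_R; the direction
   of the inequality is given by the sign of (M nu)_N, independent of x. *)
Lemma separable_of_height_monotone N Rad M u :
  (1 <= N)%nat -> orthogonal N M ->
  (forall alpha a b, 0 < alpha <= Rad ->
     in_sphere N alpha a -> in_sphere N alpha b ->
     a (N - 1)%nat <= b (N - 1)%nat -> rot N M u a <= rot N M u b) ->
  separable N Rad u.
Proof.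
  intros HN HM Hmono nu Hnu Hnu1.
  assert (Hnn : dot N nu nu = 1) by (rewrite <- norm_sq, Hnu1; ring).
  destruct (Rle_lt_dec 0 (mat_apply N M nu (N - 1)%nat)) as [Hc|Hc]; [left|right];
    intros x Hx Hd;
    destruct (rotated_reflection N Rad M u nu x HN HM Hnu Hnn Hx Hd)
      as (Hrad & Ha & Hb & Hheight & -> & ->).
  - apply Rle_ge, (Hmono (norm N x)); [exact Hrad|exact Hb|exact Ha|nra].
  - apply (Hmono (norm N x)); [exact Hrad|exact Ha|exact Hb|nra].
Qed.

Theorem theorem2p2 (N : nat) (Rad : R) (u : point -> R) :
  (2 <= N)%nat -> 0 < Rad ->
  continuous_on_ball N Rad u ->
  (forall x, in_ball N Rad x -> 0 < u x) ->
  (exists M : nat -> nat -> R,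
     orthogonal N M /\
     (forall alpha h, 0 < alpha <= Rad -> -alpha <= h <= alpha ->
        forall x y, in_sphere N alpha x -> in_sphere N alpha y ->
          x (N - 1)%nat = h -> y (N - 1)%nat = h ->
          rot N M u x = rot N M u y) /\
     (forall alpha, 0 < alpha <= Rad ->
        forall t1 t2, PI / 2 <= t1 -> t1 <= t2 -> t2 <= 3 * PI / 2 ->
          rot N M u (last2 N (alpha * cos t2) (alpha * sin t2))
          <= rot N M u (last2 N (alpha * cos t1) (alpha * sin t1)))) ->
  separable N Rad u.
Proof.
  intros HN _ _ _ [M [HM [Haxial Hmeridian]]].
  apply (separable_of_height_monotone N Rad M u); [lia|assumption|].
  intros alpha a b; apply (v_height_monotone N Rad (rot N M u)); assumption.
Qed.
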